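(* Let $G$ be a network with three sources $s_1,s_2,s_3$ and three terminals $t_1,t_2,t_3$ in which every vertex other than the sources and terminals has in-degree plus out-degree at most $3$, such that (a) $G$ has no vertex of type $(3,3)$, $(2,3)$ or $(3,2)$, and (b) for all $i,j$ there exist two edge-disjoint directed paths from $s_i$ to $t_j$. Suppose there are exactly two distinct colors among the vertices of type $(2,2)$ in $G$. Then for every finite field $\mathbb{F}$ of characteristic different from $2$ and sufficiently large size there exists a linear network code over $\mathbb{F}$ under which every terminal recovers $X_1+X_2+X_3$.
   Context: A network is a finite directed acyclic graph $G=(V,E)$ (parallel edges allowed), every edge of unit capacity carrying one symbol of a finite field $\mathbb{F}$; sources have no incoming edges ($s_i$ holds $X_i\in\mathbb{F}$, independent, uniform), terminals have no outgoing edges. In a linear network code each edge leaving a non-source vertex carries an $\mathbb{F}$-linear combination of the symbols on edges entering its tail; an edge leaving a source carries a multiple of its symbol. A terminal recovers a quantity if it is a function of the symbols on its incoming edges. For $v\in V$, $c_s(v)$ is the number of sources with a directed path to $v$ and $c_t(v)$ the number of terminals reachable from $v$ (a vertex reaches itself); $(c_s(v),c_t(v))$ is the type of $v$. For $v$ of type $(2,2)$, its color is the tuple $(s_a,s_b,t_c,t_d)$ of the two sources reaching $v$ and the two terminals reachable from $v$. *)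

From HB Require Import structures.
From mathcomp Require Import all_boot all_order all_algebra all_field.
Set Implicit Arguments. Unset Strict Implicit. Unset Printing Implicit Defensive.
Import GRing.Theory.
Local Open Scope ring_scope.

(* A network: vertex type V, edge type E (parallel edges allowed), each
   edge e goes from [tl e] to [hd e]. *)
Section Network.
Variables (V E : finType) (tl hd : E -> V).

Definition adj : rel V := fun u w => [exists e : E, (tl e == u) && (hd e == w)].

Definition reaches (u w : V) : bool := connect adj u w.

Definition acyclic : Prop := forall e : E, ~~ reaches (hd e) (tl e).

Definition indeg (v : V) : nat := #|[set e : E | hd e == v]|.
Definition outdeg (v : V) : nat := #|[set e : E | tl e == v]|.

Definition is_path (u w : V) (p : seq E) : Prop :=
  exists e0 p', p = e0 :: p' /\ tl e0 = u /\
    path (fun e f => hd e == tl f) e0 p' /\ hd (last e0 p') = w.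

Definition edge_disjoint (p q : seq E) : Prop :=
  forall e, e \in p -> e \notin q.

Variables (s t : 'I_3 -> V).

Definition is_network : Prop :=
  [/\ acyclic, injective s, injective t,
      (forall i, indeg (s i) = 0%N) & (forall j, outdeg (t j) = 0%N)].

Definition is_src (v : V) : bool := [exists i, s i == v].
Definition is_term (v : V) : bool := [exists j, t j == v].

Definition src_set (v : V) : {set 'I_3} := [set i | reaches (s i) v].
Definition term_set (v : V) : {set 'I_3} := [set j | reaches v (t j)].

Definition c_s (v : V) : nat := #|src_set v|.
Definition c_t (v : V) : nat := #|term_set v|.

Definition has_type (v : V) (a b : nat) : bool := (c_s v == a) && (c_t v == b).

Definition color (v : V) : {set 'I_3} * {set 'I_3} := (src_set v, term_set v).

Definition colors22 : {set {set 'I_3} * {set 'I_3}} :=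
  [set color v | v in [set v : V | has_type v 2 2]].

(* Linear network code over F. [k0 e] is the coefficient used on an edge
   leaving a source; [k f e] is the coefficient of the symbol on edge [f]
   (entering [tl e]) in the combination carried by [e]. [sym e X] is the
   symbol carried by edge [e] when the sources hold [X]. *)
Definition code_equations (F : fieldType) (k0 : E -> F) (k : E -> E -> F)
    (sym : E -> ('I_3 -> F) -> F) : Prop :=
  forall (X : 'I_3 -> F) (e : E),
    (forall i, tl e = s i -> sym e X = k0 e * X i) /\
    (~~ is_src (tl e) ->
       sym e X = \sum_(f : E | hd f == tl e) k f e * sym f X).

(* terminal [v] recovers X_1 + X_2 + X_3: it is a function of the symbols
   on the incoming edges of [v] *)
Definition recovers_sum (F : fieldType) (sym : E -> ('I_3 -> F) -> F) (v : V)
  : Prop :=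
  exists g : (E -> F) -> F, forall X : 'I_3 -> F,
    g (fun e => if hd e == v then sym e X else 0) = X 0 + X 1 + X 2.

Definition linear_code_sum (F : fieldType) : Prop :=
  exists (k0 : E -> F) (k : E -> E -> F) (sym : E -> ('I_3 -> F) -> F),
    code_equations k0 k sym /\ forall j, recovers_sum sym (t j).

End Network.

From HB Require Import structures.
From mathcomp Require Import all_boot all_order all_algebra all_field.
From mathcomp Require Import boolp ring.
Set Implicit Arguments. Unset Strict Implicit. Unset Printing Implicit Defensive.

(* A vertex is shared if it reaches at least two terminals. The forbidden types
   leave at most two sources reaching a shared vertex, so the edges leaving it can
   carry X_lo + w X_hi (or a single X_i), where w is an injective nonzero label of
   the cut of the vertex: the most upstream edge lying on every source walk into
   it. Distinct cuts give distinct labels, which is what makes the vector of every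
   shared vertex a combination of the vectors of its in-neighbours. For each
   terminal t_j, the two edge-disjoint paths from every source leave the shared
   part through boundary edges with distinct cuts; as only two colours occur, the
   vectors on the boundary of t_j span the all-ones vector. Every vertex reaching
   t_j only then forwards a weighted sum of its inputs along a single edge, so t_j
   receives X_1 + X_2 + X_3. *)

Section Paths.
Variables (V E : finType) (tl hd : E -> V).
Local Notation reach := (reaches tl hd).

Lemma reaches_edge e : reach (tl e) (hd e).
Proof. by apply: connect1; apply/existsP; exists e; rewrite !eqxx. Qed.

Lemma adjP u w : reflect (exists e, tl e = u /\ hd e = w) (adj tl hd u w).
Proof.
apply: (iffP existsP) => [[e /andP[/eqP h1 /eqP h2]]|[e [h1 h2]]]; exists e => //.
by rewrite h1 h2 !eqxx.
Qed.

Lemma reaches_last x y : reach x y -> x != y ->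
  exists f, hd f = y /\ reach x (tl f).
Proof.
move=> /connectP [p Hp ->]; elim/last_ind: p Hp => [|p z _] Hp; first by rewrite eqxx.
rewrite last_rcons rcons_path in Hp *; case/andP: Hp => Hp /adjP [f [h1 h2]] _.
by exists f; split => //; rewrite h1; apply/connectP; exists p.
Qed.

Lemma reaches_first x y : reach x y -> x != y ->
  exists f, tl f = x /\ reach (hd f) y.
Proof.
move=> /connectP [[|z p] Hp ->] /=; first by rewrite eqxx.
case/andP: Hp => /adjP [f [h1 h2]] Hp _; exists f; split => //; rewrite h2.
by apply/connectP; exists p.
Qed.

Definition epath (e0 : E) (q : seq E) := path (fun e f => hd e == tl f) e0 q.

Lemma epath_reaches e0 q : epath e0 q -> forall e, e \in e0 :: q ->
  reach (tl e0) (tl e) /\ reach (hd e) (hd (last e0 q)).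
Proof.
elim: q e0 => [|e1 q IH] e0 /=.
  by move=> _ e; rewrite inE => /eqP ->; split; apply: connect0.
case/andP=> /eqP h Hq e; rewrite inE => /orP [/eqP ->|He].
  split; first exact: connect0.
  have [_ H2] := IH e1 Hq e1 (mem_head _ _).
  by rewrite h; apply: connect_trans (reaches_edge e1) H2.
have [H1 H2] := IH e1 Hq e He; split => //.
by apply: connect_trans (reaches_edge e0) _; rewrite h.
Qed.

Lemma reaches_epath x y : reach x y -> x != y ->
  exists e0 q, [/\ tl e0 = x, epath e0 q & hd (last e0 q) = y].
Proof.
move=> /connectP [p Hp ->]; elim: p x Hp => [|z p IH] x /=; first by rewrite eqxx.
case/andP=> /adjP [f [h1 h2]] Hp _.
have [Hz|Hz] := eqVneq z (last z p).
  by exists f, [::]; split => //=; rewrite h2 {1}Hz.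
have [e0 [q [a1 a2 a3]]] := IH z Hp Hz.
by exists f, (e0 :: q); split => //=; rewrite h2 a1 eqxx.
Qed.

Lemma epath_rcons e0 q f :
  epath e0 (rcons q f) = epath e0 q && (hd (last e0 q) == tl f).
Proof. by rewrite /epath rcons_path. Qed.

Lemma epath_first_cross (Q : pred V) e0 q : epath e0 q -> ~~ Q (tl e0) ->
  Q (hd (last e0 q)) ->
  exists q1, [/\ epath e0 q1, {subset e0 :: q1 <= e0 :: q},
                 ~~ Q (tl (last e0 q1)) & Q (hd (last e0 q1))].
Proof.
elim: q e0 => [|e1 q IH] e0 /=; first by move=> _ H1 H2; exists [::]; split.
case/andP=> /eqP h Hq Hn HQ.
case HQ0: (Q (hd e0)).
  by exists [::]; split => //= x; rewrite inE => /eqP ->; apply: mem_head.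
have Hn1 : ~~ Q (tl e1) by rewrite -h HQ0.
have [q1 [a1 a2 a3 a4]] := IH e1 Hq Hn1 HQ.
exists (e1 :: q1); split => //=; first by rewrite h eqxx.
move=> x; rewrite inE => /orP [/eqP ->|Hx]; first exact: mem_head.
by rewrite inE (a2 x Hx) orbT.
Qed.

Hypothesis acyc : acyclic tl hd.

Definition upstream (e : E) := [set f | reach (hd f) (tl e)].

Lemma upstream_lt f e : reach (hd f) (tl e) -> #|upstream f| < #|upstream e|.
Proof.
move=> H; apply: proper_card; apply/properP; split.
  apply/subsetP => g; rewrite !inE => Hg.
  exact: connect_trans (connect_trans Hg (reaches_edge _)) H.
by exists f; rewrite inE //; apply: acyc.
Qed.

Lemma upstream_lt_adj f e : hd f = tl e -> #|upstream f| < #|upstream e|.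
Proof. by move=> H; apply: upstream_lt; rewrite H; apply: connect0. Qed.

End Paths.

Import GRing.Theory.
Local Open Scope ring_scope.

Lemma mem_cons_rcons (T : eqType) (x y z : T) q :
  (x \in y :: rcons q z) = (x == z) || (x \in y :: q).
Proof. by rewrite !inE mem_rcons !inE; case: (x == y); case: (x == z); rewrite ?orbT. Qed.

Lemma sum_delta_mul (R : pzSemiRingType) (I : finType) (P : pred I) h c (G : I -> R) :
  P h -> \sum_(i | P i) (if i == h then c else 0) * G i = c * G h.
Proof.
move=> Ph; rewrite (bigD1 h) //= eqxx big1 ?addr0 // => i /andP [_ /negbTE ->].
by rewrite mul0r.
Qed.

Lemma subset_pair (T : finType) (A : {set T}) lo hi : A \subset [set lo; hi] ->
  [\/ A = set0, A = [set lo], A = [set hi] | A = [set lo; hi]].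
Proof.
move=> /subsetP H.
have Hx x : x \in A -> (x == lo) || (x == hi) by move/H; rewrite !inE.
case Hl: (lo \in A); case Hh: (hi \in A).
- apply: Or44; apply/setP => x; rewrite !inE.
  by apply/idP/idP => [/Hx //|/orP [] /eqP ->].
- apply: Or42; apply/setP => x; rewrite !inE; apply/idP/idP => [Hxa|/eqP -> //].
  by case/orP: (Hx _ Hxa) => // /eqP E1; rewrite E1 Hh in Hxa.
- apply: Or43; apply/setP => x; rewrite !inE; apply/idP/idP => [Hxa|/eqP -> //].
  by case/orP: (Hx _ Hxa) => // /eqP E1; rewrite E1 Hl in Hxa.
- apply: Or41; apply/setP => x; rewrite !inE; apply/negbTE/negP => Hxa.
  by case/orP: (Hx _ Hxa) => /eqP E1; rewrite E1 ?Hl ?Hh in Hxa.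
Qed.

Lemma card2_ordP n (A : {set 'I_n}) : #|A| = 2 ->
  exists lo hi, A = [set lo; hi] /\ (lo < hi)%N.
Proof.
move/eqP/cards2P => [x [y [Hxy ->]]].
case: (ltngtP x y) => H; first by exists x, y.
  by exists y, x; rewrite setUC.
by move: Hxy; rewrite (val_inj H) eqxx.
Qed.

Lemma card2_eq (T : finType) (P : {set T}) x y : #|P| = 2 -> x != y ->
  x \in P -> y \in P -> P = [set x; y].
Proof.
move=> HP Hxy Hx Hy; apply/eqP; rewrite eq_sym eqEcard HP cards2 Hxy leqnn andbT.
by apply/subsetP => z; rewrite !inE => /orP [] /eqP ->.
Qed.

Lemma ord3_third (i l : 'I_3) : i != l ->
  exists k, [/\ k != i, k != l & forall x, [\/ x = i, x = l | x = k]].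
Proof.
move=> Hil; have : #|~: [set i; l]| = 1.
  by have := cardsC [set i; l]; rewrite cards2 Hil card_ord => -[].
move/eqP/cards1P => [k Hk]; have := set11 k; rewrite -Hk !inE negb_or => /andP [Hki Hkl].
exists k; split => // x; case Hx: (x \in ~: [set i; l]).
  by move: Hx; rewrite Hk inE => /eqP ->; apply: Or33.
move: Hx; rewrite !inE negb_or => /negbT; rewrite negb_and !negbK.
by case/orP => /eqP ->; [apply: Or31|apply: Or32].
Qed.

Lemma sum_ord3 (R : nmodType) (X : 'I_3 -> R) : \sum_x X x = X 0 + X 1 + X 2.
Proof.
rewrite !big_ord_recr big_ord0 /= add0r; congr (_ + _ + _); congr X; exact: val_inj.
Qed.

Lemma ones_comb3 (F : fieldType) (i l k : 'I_3) (a b c : 'I_3 -> F) :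
  (forall x, [\/ x = i, x = l | x = k]) -> a k = 0 -> b k = 0 ->
  a i * b l - a l * b i != 0 -> c k != 0 ->
  exists la lb lc, forall x, la * a x + lb * b x + lc * c x = 1.
Proof.
move=> Hx ak bk HD ck; set D := a i * b l - a l * b i.
pose r x := 1 - c x / c k.
exists ((r i * b l - r l * b i) / D), ((a i * r l - a l * r i) / D), (c k)^-1.
by move=> x; case: (Hx x) => ->; rewrite ?ak ?bk /r /D; field; rewrite ck HD.
Qed.

(** * Solving the code equations *)

Section Symbols.
Variables (V E : finType) (tl hd : E -> V) (s : 'I_3 -> V).
Hypotheses (acyc : acyclic tl hd) (s_inj : injective s).
Variables (F : fieldType) (k0 : E -> F) (k : E -> E -> F).

Definition sym_step (sg : E -> ('I_3 -> F) -> F) (e : E) (X : 'I_3 -> F) : F :=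
  if [pick i | s i == tl e] is Some i then k0 e * X i
  else \sum_(f | hd f == tl e) k f e * sg f X.

(* Iterating [sym_step] more than the number of upstream edges of [e] fixes the
   symbol on [e]; [#|E|.+1] iterations thus solve the code equations. *)
Definition code_sym := iter #|E|.+1 sym_step (fun _ _ => 0).

Lemma iter_sym_step_stable n e X m : (#|upstream tl hd e| < n)%N -> (n <= m)%N ->
  iter m sym_step (fun _ _ => 0) e X = iter n sym_step (fun _ _ => 0) e X.
Proof.
elim: n e m => [//|n IH] e [//|m] He Hm /=.
rewrite /sym_step; case: pickP => // _.
apply: eq_bigr => f /eqP Hf; congr (_ * _).
by apply: IH => //; apply: leq_trans (upstream_lt_adj acyc Hf) _; rewrite -ltnS.
Qed.

Lemma code_symE e X : code_sym e X = sym_step code_sym e X.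
Proof.
rewrite /code_sym -[RHS]/(iter #|E|.+2 sym_step _ e X).
by rewrite (@iter_sym_step_stable #|E|.+1) // ltnS max_card.
Qed.

Lemma code_sym_equations : code_equations tl hd s k0 k code_sym.
Proof.
move=> X e; split => [i Hi|Hn]; rewrite code_symE /sym_step; case: pickP.
- by move=> j /eqP Hj; rewrite (s_inj (etrans Hj Hi)).
- by move/(_ i); rewrite Hi eqxx.
- by move=> j /eqP Hj; move/negP: Hn; case; apply/existsP; exists j; rewrite Hj.
- by [].
Qed.

End Symbols.

Section Network.
Variables (V E : finType) (tl hd : E -> V) (s t : 'I_3 -> V).
Hypothesis net : is_network tl hd s t.
Hypothesis deg3 : forall v, ~~ is_src s v -> ~~ is_term t v ->
  (indeg hd v + outdeg tl v <= 3)%N.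
Hypothesis types : forall v, ~~ has_type tl hd s t v 3 3 /\
  ~~ has_type tl hd s t v 2 3 /\ ~~ has_type tl hd s t v 3 2.
Hypothesis two_paths : forall i j, exists p q, is_path tl hd (s i) (t j) p /\
  is_path tl hd (s i) (t j) q /\ edge_disjoint p q.
Hypothesis two_colors : #|colors22 tl hd s t| = 2.

Local Notation reach := (reaches tl hd).
Local Notation S := (src_set tl hd s).
Local Notation T := (term_set tl hd t).

Let acyc : acyclic tl hd. Proof. by case: net. Qed.
Let s_inj : injective s. Proof. by case: net. Qed.
Let t_inj : injective t. Proof. by case: net. Qed.

Lemma is_srcP v : reflect (exists i, v = s i) (is_src s v).
Proof. by apply: (iffP existsP) => [[i /eqP <-]|[i ->]]; exists i. Qed.

Lemma is_termP v : reflect (exists j, v = t j) (is_term t v).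
Proof. by apply: (iffP existsP) => [[i /eqP <-]|[i ->]]; exists i. Qed.

Lemma hd_neq_src i e : hd e != s i.
Proof.
case: net => _ _ _ /(_ i) /eqP + _; rewrite cards_eq0 => /eqP /setP /(_ e).
by rewrite !inE => /negbT.
Qed.

Lemma tl_neq_term j e : tl e != t j.
Proof.
case: net => _ _ _ _ /(_ j) /eqP; rewrite cards_eq0 => /eqP /setP /(_ e).
by rewrite !inE => /negbT.
Qed.

Lemma reaches_src v i : reach v (s i) -> v = s i.
Proof.
move=> H; have [//|Hn] := eqVneq v (s i).
by have [f [h _]] := reaches_last H Hn; have := hd_neq_src i f; rewrite h eqxx.
Qed.

Lemma term_reaches v j : reach (t j) v -> v = t j.
Proof.
move=> H; have [//|Hn] := eqVneq (t j) v.
by have [f [h _]] := reaches_first H Hn; have := tl_neq_term j f; rewrite h eqxx.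
Qed.

Lemma src_set_src i : S (s i) = [set i].
Proof.
apply/setP => x; rewrite !inE; apply/idP/eqP => [H|->]; last exact: connect0.
exact: s_inj (reaches_src H).
Qed.

Lemma term_set_term j : T (t j) = [set j].
Proof.
apply/setP => x; rewrite !inE; apply/idP/eqP => [H|->]; last exact: connect0.
by apply: t_inj; rewrite -(term_reaches H).
Qed.

Lemma is_path_reaches u w p : is_path tl hd u w p -> reach u w.
Proof.
case=> e0 [q [_ [<- [Hq <-]]]].
have [_ H] := epath_reaches Hq (mem_head e0 q).
exact: connect_trans (reaches_edge _ _ _) H.
Qed.

Lemma term_set_src i : T (s i) = setT.
Proof.
apply/setP => j; rewrite !inE.
by have [p [q [Hp _]]] := two_paths i j; apply: is_path_reaches Hp.
Qed.

Lemma src_set_sub u w : reach u w -> S u \subset S w.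
Proof. by move=> H; apply/subsetP => x; rewrite !inE => Hx; apply: connect_trans Hx H. Qed.

Lemma term_set_sub u w : reach u w -> T w \subset T u.
Proof. by move=> H; apply/subsetP => x; rewrite !inE; apply: connect_trans H. Qed.

Lemma src_set_edge f : S (tl f) \subset S (hd f).
Proof. exact/src_set_sub/reaches_edge. Qed.

Lemma term_set_edge f : T (hd f) \subset T (tl f).
Proof. exact/term_set_sub/reaches_edge. Qed.

Lemma src_set_in v i : ~~ is_src s v -> i \in S v ->
  exists f, hd f = v /\ i \in S (tl f).
Proof.
move=> Hv; rewrite inE => H.
have Hn : s i != v by apply: contraNneq Hv => <-; apply/is_srcP; exists i.
by have [f [h1 h2]] := reaches_last H Hn; exists f; rewrite inE.
Qed.

Lemma src_set_epath u i : i \in S u -> ~~ is_src s u ->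
  exists e0 q, [/\ tl e0 = s i, epath tl hd e0 q & hd (last e0 q) = u].
Proof.
rewrite inE => H Hu; apply: reaches_epath H _.
by apply: contraNneq Hu => <-; apply/is_srcP; exists i.
Qed.

Lemma card_src_set v : (#|S v| <= 3)%N.
Proof. by apply: leq_trans (max_card _) _; rewrite card_ord. Qed.

Lemma card_term_set v : (#|T v| <= 3)%N.
Proof. by apply: leq_trans (max_card _) _; rewrite card_ord. Qed.

Definition shared v := (2 <= #|T v|)%N.

Lemma card_src_set_shared v : shared v -> (#|S v| <= 2)%N.
Proof.
rewrite /shared => H; have [+ [_ +]] := types v; rewrite /has_type /c_s /c_t.
have := card_src_set v; have := card_term_set v.
by move: H; case: #|T v| => [|[|[|[|n]]]] //; case: #|S v| => [|[|[|[|n']]]].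
Qed.

Lemma card_term_set22 v : shared v -> #|S v| = 2 -> #|T v| = 2.
Proof.
rewrite /shared => H Hs; have [_ [+ _]] := types v.
rewrite /has_type /c_s /c_t Hs /=; have := card_term_set v.
by move: H; case: #|T v| => [|[|[|[|n]]]].
Qed.

Lemma shared_src i : shared (s i).
Proof. by rewrite /shared term_set_src cardsT card_ord. Qed.

Lemma shared_reaches u w : reach u w -> shared w -> shared u.
Proof. by move=> H /leq_trans; apply; apply/subset_leq_card/term_set_sub. Qed.

Lemma card_src_set_src v : is_src s v -> #|S v| = 1.
Proof. by case/is_srcP => i ->; rewrite src_set_src cards1. Qed.

Definition type22 u := (#|S u| == 2) && shared u.

Lemma card_src_set22 u : type22 u -> #|S u| = 2.
Proof. by case/andP => /eqP. Qed.

Lemma type22_shared u : type22 u -> shared u.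
Proof. by case/andP. Qed.

Lemma type22_not_src u : type22 u -> ~~ is_src s u.
Proof. by move=> /card_src_set22 H; apply/negP => /card_src_set_src; rewrite H. Qed.

Lemma type22_not_term u : type22 u -> ~~ is_term t u.
Proof.
move=> /type22_shared; rewrite /shared => H.
by apply/negP => /is_termP [j Hj]; move: H; rewrite Hj term_set_term cards1.
Qed.

Lemma type22_in_edge u f : type22 u -> hd f = u -> S (tl f) = S u -> type22 (tl f).
Proof.
move=> Hu Hf HS; rewrite /type22 HS card_src_set22 //=.
by apply: shared_reaches (type22_shared Hu); rewrite -Hf reaches_edge.
Qed.

Lemma outdeg_type22 u : type22 u -> (2 <= indeg hd u)%N -> (outdeg tl u <= 1)%N.
Proof.
move=> Hu Hi; have := deg3 (type22_not_src Hu) (type22_not_term Hu).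
move: Hi; case: (indeg hd u) => [|[|n]] //= _.
by rewrite !addSn !ltnS => /(leq_trans (leq_addl _ _)).
Qed.

(** * Cuts *)

Definition src_epath e0 q u :=
  [&& is_src s (tl e0), epath tl hd e0 q & hd (last e0 q) == u].

Definition cut_edges u :=
  [set c | `[< forall e0 q, src_epath e0 q u -> c \in e0 :: q >]].

Definition cut_key c := (#|upstream tl hd c| * #|E| + enum_rank c)%N.

(* The most upstream edge on every source walk into [u]; when there is none,
   [u] has two in-edges and we take its (then unique) out-edge. In both cases
   [cut u] lies on every source walk through [u] (see [cut_on_src_epath]). *)
Definition cut u : option E :=
  if [pick c in cut_edges u] is Some c0
  then Some [arg min_(c < c0 in cut_edges u) cut_key c]
  else [pick e | tl e == u].

Lemma cut_edgesP c u :
  reflect (forall e0 q, src_epath e0 q u -> c \in e0 :: q) (c \in cut_edges u).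
Proof. by rewrite inE; apply: asboolP. Qed.

Lemma cut_min u c : c \in cut_edges u -> exists2 c', cut u = Some c' &
  c' \in cut_edges u /\ forall c'', c'' \in cut_edges u -> (cut_key c' <= cut_key c'')%N.
Proof.
move=> Hc; rewrite /cut; case: pickP => [c0 Hc0|/(_ c)]; last by rewrite Hc.
by case: arg_minnP => //= c' Hc' Hmin; exists c'.
Qed.

Lemma cut_key_inj : injective cut_key.
Proof.
move=> c1 c2; rewrite /cut_key => H.
have Hn : (0 < #|E|)%N by apply/card_gt0P; exists c1.
move/(congr1 (modn^~ #|E|)): H.
by rewrite !modnMDl !modn_small ?ltn_ord // => /ord_inj /enum_rank_inj.
Qed.

Lemma cut_key_epath e0 q c f : epath tl hd e0 q -> c \in e0 :: q ->
  hd (last e0 q) = tl f -> (cut_key c < cut_key f)%N.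
Proof.
move=> Hq Hc Hl; have [_ Hr] := epath_reaches Hq Hc; rewrite Hl in Hr.
have Hlt := upstream_lt acyc Hr; rewrite /cut_key.
apply: (@leq_trans (#|upstream tl hd c|.+1 * #|E|)).
  by rewrite mulSn [X in (_ < X)%N]addnC ltn_add2l ltn_ord.
by apply: leq_trans (leq_addr _ _); rewrite leq_mul2r Hlt orbT.
Qed.

Lemma indeg_cut_edges_eq0 u e0 q : src_epath e0 q u -> cut_edges u = set0 ->
  (2 <= indeg hd u)%N.
Proof.
move=> Hsp K0; set h := last e0 q.
have Hh : hd h = u by case/and3P: Hsp => _ _ /eqP.
have [h' /andP [/eqP Hh' Hne]] : exists h', (hd h' == u) && (h' != h).
  case: (pickP (fun h' => (hd h' == u) && (h' != h))) => [h' H|H]; first by exists h'.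
  suff : h \in cut_edges u by rewrite K0 inE.
  apply/cut_edgesP => e1 q1 /and3P [_ _ /eqP Hl].
  by have := H (last e1 q1); rewrite Hl eqxx /= => /negbFE /eqP <-; apply: mem_last.
apply: (@leq_trans #|[set h; h']|); first by rewrite cards2 eq_sym Hne.
by apply/subset_leq_card/subsetP => x; rewrite !inE => /orP [] /eqP ->; rewrite ?Hh ?Hh'.
Qed.

Lemma cut_out_edge u e0 q g : src_epath e0 q u -> type22 u ->
  cut_edges u = set0 -> tl g = u -> cut u = Some g.
Proof.
move=> Hsp Hu K0 Hg; have := outdeg_type22 Hu (indeg_cut_edges_eq0 Hsp K0).
rewrite /cut; case: pickP => [c|_]; first by rewrite K0 inE.
case: pickP => [o /eqP Ho|/(_ g)]; last by rewrite Hg eqxx.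
by move=> /card_le1_eqP Hall; congr Some; apply: Hall; rewrite inE ?Ho ?Hg.
Qed.

Lemma cut_on_src_epath e0 q : is_src s (tl e0) -> epath tl hd e0 q ->
  type22 (tl (last e0 q)) -> exists2 c, cut (tl (last e0 q)) = Some c & c \in e0 :: q.
Proof.
move=> Hs; elim/last_ind: q => [|q g _] /=.
  by move=> _ /type22_not_src; rewrite Hs.
rewrite last_rcons epath_rcons => /andP [Hq /eqP Hg] Hu.
have Hsp : src_epath e0 q (tl g) by rewrite /src_epath Hs Hq Hg eqxx.
have [K0|[c Hc]] := set_0Vmem (cut_edges (tl g)).
  by exists g; [apply: cut_out_edge Hsp Hu K0 _ | rewrite mem_cons_rcons eqxx].
have [c' Hc' [/cut_edgesP /(_ _ _ Hsp) Hin _]] := cut_min Hc.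
by exists c' => //; rewrite mem_cons_rcons Hin orbT.
Qed.

Section CutInherit.
Variables (u : V) (f0 : E).
Hypotheses (Hu : type22 u) (Hf0 : hd f0 = u) (HS0 : S (tl f0) = S u).
Hypothesis inputs : forall f, hd f = u ->
  S (tl f) = set0 \/ (S (tl f) = S u /\ cut (tl f) = cut (tl f0)).

Lemma cut_inherit_mem c : cut (tl f0) = Some c -> c \in cut_edges u.
Proof.
move=> Hc; apply/cut_edgesP => e1 q1 /and3P [Hs1 Hq1 /eqP Hl1].
move: Hq1 Hl1; elim/last_ind: q1 => [|q2 g _] /=.
  move=> _ /inputs [H|[H _]]; have := card_src_set_src Hs1.
    by rewrite H cards0.
  by rewrite H card_src_set22.
rewrite last_rcons => Hq1 Hg; case: (inputs Hg) => [H|[H1 H2]].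
  case/is_srcP: Hs1 => i1 Hi1.
  have [+ _] := epath_reaches Hq1 (mem_last e1 (rcons q2 g)).
  by rewrite last_rcons Hi1 => H3; have := in_set0 i1; rewrite -H inE H3.
have Hg' : type22 (tl (last e1 (rcons q2 g))).
  by rewrite last_rcons; apply: type22_in_edge Hu Hg H1.
have [c' + Hc'] := cut_on_src_epath Hs1 Hq1 Hg'.
by rewrite last_rcons H2 Hc => -[->].
Qed.

(* [cut (tl f0)] lies on every source walk into [u], and the minimal such edge
   lies strictly upstream of [f0], hence on every source walk into [tl f0]. *)
Lemma cut_inherit : cut u = cut (tl f0).
Proof.
have Hv0 : type22 (tl f0) := type22_in_edge Hu Hf0 HS0.
have [i Hi] : exists i, i \in S (tl f0).
  by apply/set0Pn; rewrite -card_gt0 card_src_set22.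
have [e0 [q [He0 Hq Hl]]] := src_set_epath Hi (type22_not_src Hv0).
have Hsrc : is_src s (tl e0) by apply/is_srcP; exists i.
have Hq' : epath tl hd e0 (rcons q f0) by rewrite epath_rcons Hq Hl eqxx.
have Hlast : type22 (tl (last e0 (rcons q f0))) by rewrite last_rcons.
have [cs Hcs Hcsin] := cut_on_src_epath Hsrc Hq' Hlast.
rewrite last_rcons in Hcs.
have Hspu : src_epath e0 (rcons q f0) u.
  by rewrite /src_epath Hsrc Hq' last_rcons Hf0 eqxx.
have [c' Hc' [Hc'K Hmin]] := cut_min (cut_inherit_mem Hcs).
rewrite Hc' Hcs; congr Some; apply: cut_key_inj; apply/eqP.
rewrite eqn_leq Hmin ?cut_inherit_mem //=.
move: (Hc'K) => /cut_edgesP /(_ _ _ Hspu); rewrite mem_cons_rcons.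
case/orP => [/eqP ->|Hc'in].
  move: Hcsin; rewrite mem_cons_rcons => /orP [/eqP ->//|Hcsq].
  by apply: ltnW; apply: cut_key_epath Hq Hcsq Hl.
have Hc'v : c' \in cut_edges (tl f0).
  apply/cut_edgesP => e1 q1 /and3P [Hs1 Hq1 /eqP Hl1].
  have : src_epath e1 (rcons q1 f0) u.
    by rewrite /src_epath Hs1 epath_rcons Hq1 Hl1 last_rcons Hf0 !eqxx.
  move/cut_edgesP: Hc'K => H /H; rewrite mem_cons_rcons => /orP [/eqP Heq|//].
  by have := cut_key_epath Hq Hc'in Hl; rewrite Heq ltnn.
have [c'' + [_ Hmin']] := cut_min Hc'v.
by rewrite Hcs => -[->]; apply: Hmin'.
Qed.

End CutInherit.

(** * The boundary of a terminal *)

Definition boundary j := [set e | shared (tl e) & T (hd e) == [set j]].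

Lemma shared_term_set v j : j \in T v -> T v != [set j] -> shared v.
Proof.
move=> Hj Hn; rewrite /shared ltnNge; apply: contra Hn => H.
by rewrite eq_sym eqEcard sub1set Hj cards1.
Qed.

Lemma is_path_boundary m j p : is_path tl hd (s m) (t j) p -> exists e0 q,
  [/\ tl e0 = s m, epath tl hd e0 q, {subset e0 :: q <= p} & last e0 q \in boundary j].
Proof.
case=> e0 [q [-> [h1 [h2 h3]]]].
have Hn : T (tl e0) != [set j].
  by rewrite h1 term_set_src; apply/eqP => H; have := cards1 j; rewrite -H cardsT card_ord.
have Hq : T (hd (last e0 q)) == [set j] by rewrite h3 term_set_term.
have [q1 [a1 a2 a3 a4]] := epath_first_cross (Q := fun v => T v == [set j]) h2 Hn Hq.
exists e0, q1; split => //; rewrite inE a4 andbT.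
apply: (shared_term_set (j := j)) => //.
by apply: (subsetP (term_set_edge _)); rewrite (eqP a4) inE.
Qed.

(* Two edge-disjoint paths from [s m] leave the shared part through boundary
   edges whose tails have distinct cuts, since each cut lies on its own path. *)
Lemma boundary_distinct_cuts m j : exists b b', [/\ b \in boundary j, b' \in boundary j,
  m \in S (tl b), m \in S (tl b') &
  (type22 (tl b) -> type22 (tl b') -> cut (tl b) != cut (tl b'))].
Proof.
have [p [q [Hp [Hq Hd]]]] := two_paths m j.
have [e0 [q1 [a1 a2 a3 a4]]] := is_path_boundary Hp.
have [e0' [q1' [b1 b2 b3 b4]]] := is_path_boundary Hq.
exists (last e0 q1), (last e0' q1'); split => //.
- by have [H _] := epath_reaches a2 (mem_last e0 q1); rewrite inE -a1.
- by have [H _] := epath_reaches b2 (mem_last e0' q1'); rewrite inE -b1.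
move=> P1 P2.
have Hs1 : is_src s (tl e0) by apply/is_srcP; exists m.
have Hs2 : is_src s (tl e0') by apply/is_srcP; exists m.
have [c -> Hcin] := cut_on_src_epath Hs1 a2 P1.
have [c' -> Hcin'] := cut_on_src_epath Hs2 b2 P2.
by apply/eqP => -[E1]; have := Hd c (a3 _ Hcin); rewrite E1 (b3 _ Hcin').
Qed.

Lemma color_colors22 v : type22 v -> color tl hd s t v \in colors22 tl hd s t.
Proof.
move=> Hv; apply/imsetP; exists v => //; rewrite inE /has_type /c_s /c_t.
by rewrite (card_src_set22 Hv) (card_term_set22 (type22_shared Hv) (card_src_set22 Hv)) !eqxx.
Qed.

(* With only two colours, two of any three (2,2)-vertices share their sources. *)
Lemma type22_src_set_eq v1 v2 v3 : type22 v1 -> type22 v2 -> type22 v3 ->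
  [\/ S v1 = S v2, S v1 = S v3 | S v2 = S v3].
Proof.
move=> H1 H2 H3.
have [|n12] := eqVneq (S v1) (S v2); first by move=> ?; apply: Or31.
have [|n13] := eqVneq (S v1) (S v3); first by move=> ?; apply: Or32.
have [|n23] := eqVneq (S v2) (S v3); first by move=> ?; apply: Or33.
have col_neq v w : S v != S w -> color tl hd s t v != color tl hd s t w.
  by apply: contra => /eqP /(congr1 fst) /= ->.
have : (#|color tl hd s t v1 |: (color tl hd s t v2 |: [set color tl hd s t v3])|
         <= #|colors22 tl hd s t|)%N.
  by apply/subset_leq_card/subsetP => c; rewrite !inE => /orP [|/orP []] /eqP ->;
    apply: color_colors22.
by rewrite two_colors !cardsU1 cards1 !inE negb_or !col_neq.
Qed.

(** * Global encoding vectors *)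

Section EncodingVectors.
Variables (F : fieldType) (label : option E -> F).
Hypotheses (label_inj : injective label) (label_neq0 : forall x, label x != 0).

(* The global encoding vector of a shared vertex [u]: [X_lo + label (cut u) * X_hi]
   when [S u = {lo < hi}], [X_i] when [S u = {i}]. *)
Definition gev (u : V) (x : 'I_3) : F :=
  if x \in S u then (if [exists y in S u, (y < x)%N] then label (cut u) else 1)
  else 0.

Lemma gev_out u x : x \notin S u -> gev u x = 0.
Proof. by rewrite /gev => /negbTE ->. Qed.

Lemma gev_single u i : S u = [set i] -> forall x, gev u x = (x == i)%:R.
Proof.
move=> H x; rewrite /gev H inE; case: (eqVneq x i) => // ->.
by case: existsP => // -[y]; rewrite inE => /andP [/eqP ->]; rewrite ltnn.
Qed.

Lemma gev_pair u lo hi : S u = [set lo; hi] -> (lo < hi)%N ->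
  gev u lo = 1 /\ gev u hi = label (cut u).
Proof.
move=> H Hlt; rewrite /gev H !inE !eqxx ?orbT /=; split.
  case: existsP => // -[y]; rewrite !inE => /andP [/orP [] /eqP -> Hl].
    by rewrite ltnn in Hl.
  by move: (ltn_trans Hl Hlt); rewrite ltnn.
by case: existsP => // -[]; exists lo; rewrite !inE eqxx Hlt.
Qed.

Lemma gev_neq0 u x : x \in S u -> gev u x != 0.
Proof. by rewrite /gev => ->; case: existsP => _; rewrite ?label_neq0 ?oner_eq0. Qed.

Definition gev_from_inputs u := exists c : E -> F,
  forall x, gev u x = \sum_(f | hd f == u) c f * gev (tl f) x.

Lemma gev_from_two_inputs u lo hi f g a b : S u = [set lo; hi] -> hd f = u -> hd g = u ->
  gev u lo = a * gev (tl f) lo + b * gev (tl g) lo ->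
  gev u hi = a * gev (tl f) hi + b * gev (tl g) hi -> gev_from_inputs u.
Proof.
move=> Su Hf Hg Hlo Hhi.
exists (fun h => (if h == f then a else 0) + (if h == g then b else 0)) => x.
rewrite (eq_bigr (fun h => (if h == f then a else 0) * gev (tl h) x +
  (if h == g then b else 0) * gev (tl h) x)); last by move=> h _; rewrite mulrDl.
rewrite big_split /= !sum_delta_mul ?Hf ?Hg //.
have [Hx|Hx] := boolP (x \in S u); first by move: Hx; rewrite Su !inE => /orP [] /eqP ->.
have gev_in h : hd h = u -> gev (tl h) x = 0.
  by move=> Hh; apply: gev_out; apply: contra Hx; apply/subsetP; rewrite -Hh src_set_edge.
by rewrite gev_out // !gev_in // !mulr0 addr0.
Qed.

Section PairVertex.
Variables (u : V) (lo hi : 'I_3).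
Hypotheses (Su : S u = [set lo; hi]) (lo_hi : (lo < hi)%N).

Let lo_neq_hi : lo != hi. Proof. by rewrite neq_ltn lo_hi. Qed.
Let hi_neq_lo : hi != lo. Proof. by rewrite eq_sym. Qed.
Let gev_u := gev_pair Su lo_hi.

Lemma gev_from_singletons f g : hd f = u -> hd g = u ->
  S (tl f) = [set lo] -> S (tl g) = [set hi] -> gev_from_inputs u.
Proof.
move=> Hf Hg Sf Sg; apply: (gev_from_two_inputs (a := 1) (b := label (cut u)) Su Hf Hg).
  by rewrite gev_u.1 (gev_single Sf) (gev_single Sg) eqxx (negbTE lo_neq_hi) /=; ring.
by rewrite gev_u.2 (gev_single Sf) (gev_single Sg) eqxx (negbTE hi_neq_lo) /=; ring.
Qed.

Lemma gev_from_pair_lo f g : hd f = u -> hd g = u ->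
  S (tl f) = [set lo; hi] -> S (tl g) = [set lo] -> gev_from_inputs u.
Proof.
move=> Hf Hg Sf Sg; have [f1 f2] := gev_pair Sf lo_hi.
have Hn := label_neq0 (cut (tl f)); set r := label (cut u) / label (cut (tl f)).
apply: (gev_from_two_inputs (a := r) (b := 1 - r) Su Hf Hg).
  by rewrite gev_u.1 f1 (gev_single Sg) eqxx /=; ring.
by rewrite gev_u.2 f2 (gev_single Sg) (negbTE hi_neq_lo) /= /r; field.
Qed.

Lemma gev_from_pair_hi f g : hd f = u -> hd g = u ->
  S (tl f) = [set lo; hi] -> S (tl g) = [set hi] -> gev_from_inputs u.
Proof.
move=> Hf Hg Sf Sg; have [f1 f2] := gev_pair Sf lo_hi.
apply: (gev_from_two_inputs (a := 1) (b := label (cut u) - label (cut (tl f))) Su Hf Hg).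
  by rewrite gev_u.1 f1 (gev_single Sg) (negbTE lo_neq_hi) /=; ring.
by rewrite gev_u.2 f2 (gev_single Sg) eqxx /=; ring.
Qed.

(* Two inputs with distinct labels span the plane of vectors supported on [S u]. *)
Lemma gev_from_pairs f g : hd f = u -> hd g = u ->
  S (tl f) = [set lo; hi] -> S (tl g) = [set lo; hi] -> cut (tl f) != cut (tl g) ->
  gev_from_inputs u.
Proof.
move=> Hf Hg Sf Sg Hne; have [f1 f2] := gev_pair Sf lo_hi; have [g1 g2] := gev_pair Sg lo_hi.
have Hd : label (cut (tl f)) - label (cut (tl g)) != 0.
  by rewrite subr_eq0; apply: contra Hne => /eqP /label_inj ->.
apply: (gev_from_two_inputs Su Hf Hg
  (a := (label (cut u) - label (cut (tl g))) / (label (cut (tl f)) - label (cut (tl g))))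
  (b := (label (cut (tl f)) - label (cut u)) / (label (cut (tl f)) - label (cut (tl g))))).
  by rewrite gev_u.1 f1 g1; field.
by rewrite gev_u.2 f2 g2; field.
Qed.

Lemma gev_from_pair_cut f : hd f = u -> S (tl f) = [set lo; hi] -> cut (tl f) = cut u ->
  gev_from_inputs u.
Proof.
move=> Hf Sf Hc; have [f1 f2] := gev_pair Sf lo_hi.
apply: (gev_from_two_inputs (a := 1) (b := 0) Su Hf Hf).
  by rewrite gev_u.1 f1; ring.
by rewrite gev_u.2 f2 Hc; ring.
Qed.

(* If some input carries a pair vector, any input that is not a copy of it
   completes a basis, and if all inputs are copies then [u] inherits its cut;
   otherwise the inputs are the two singletons. *)
Lemma gev_from_inputs22 : type22 u -> gev_from_inputs u.
Proof.
move=> Hu; have Hns := type22_not_src Hu.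
have inputs f : hd f = u -> [\/ S (tl f) = set0, S (tl f) = [set lo], S (tl f) = [set hi]
    | S (tl f) = [set lo; hi]].
  by move=> Hf; apply: subset_pair; rewrite -Su -Hf src_set_edge.
case: (pickP (fun f => (hd f == u) && (S (tl f) == [set lo; hi]))) =>
    [f /andP [/eqP Hf /eqP Sf]|no_pair].
  case: (pickP (fun g => (hd g == u) &&
      ~~ ((S (tl g) == set0) || (S (tl g) == S u) && (cut (tl g) == cut (tl f))))) =>
      [g /andP [/eqP Hg Hbad]|all_copies].
    case: (inputs _ Hg) => Sg; first by rewrite Sg eqxx in Hbad.
    - exact: gev_from_pair_lo Hf Hg Sf Sg.
    - exact: gev_from_pair_hi Hf Hg Sf Sg.
    move: Hbad; rewrite Sg Su eqxx negb_or /= => /andP [_ Hne].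
    by apply: gev_from_pairs Hf Hg Sf Sg _; rewrite eq_sym.
  apply: (gev_from_pair_cut Hf Sf); symmetry; apply: cut_inherit Hu Hf _ _.
    by rewrite Sf Su.
  move=> g Hg; have := all_copies g; rewrite Hg eqxx /= => /negbFE.
  by case/orP => [/eqP|/andP [/eqP H1 /eqP H2]]; [left|right].
have single x f : hd f = u -> x \in S (tl f) -> S (tl f) = [set lo] \/ S (tl f) = [set hi].
  move=> Hf Hx; case: (inputs _ Hf) => Sf; [by rewrite Sf inE in Hx|left|right|] => //.
  by have := no_pair f; rewrite Hf Sf !eqxx.
have [fl [Hfl Hlf]] : exists f, hd f = u /\ lo \in S (tl f).
  by apply: src_set_in Hns _; rewrite Su !inE eqxx.
have [fh [Hfh Hhf]] : exists f, hd f = u /\ hi \in S (tl f).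
  by apply: src_set_in Hns _; rewrite Su !inE eqxx orbT.
case: (single _ _ Hfl Hlf) => Sl; last by move: Hlf; rewrite Sl inE (negbTE lo_neq_hi).
case: (single _ _ Hfh Hhf) => Sh; first by move: Hhf; rewrite Sh inE eq_sym (negbTE lo_neq_hi).
exact: gev_from_singletons Hfl Hfh Sl Sh.
Qed.

End PairVertex.

Lemma gev_from_inputs_shared u : shared u -> ~~ is_src s u -> gev_from_inputs u.
Proof.
move=> Hsh Hns; have := card_src_set_shared Hsh.
rewrite leq_eqVlt ltnS leq_eqVlt ltnS leqn0 cards_eq0; case/or3P => [/eqP H2|/eqP H1|/eqP H0].
- have [lo [hi [Su Hlt]]] := card2_ordP H2.
  by apply: gev_from_inputs22 Su Hlt _; rewrite /type22 H2 eqxx.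
- move/eqP/cards1P: H1 => [i Hi].
  have [f [Hf Hif]] : exists f, hd f = u /\ i \in S (tl f).
    by apply: src_set_in Hns _; rewrite Hi inE.
  have Sf : S (tl f) = [set i].
    by apply/eqP; rewrite eqEsubset sub1set Hif andbT -Hi -Hf src_set_edge.
  have Su : S u = [set i; i] by rewrite setUid.
  apply: (gev_from_two_inputs (a := 1) (b := 0) Su Hf Hf);
    by rewrite (gev_single Hi) (gev_single Sf); ring.
- exists (fun=> 0) => x; rewrite gev_out ?H0 ?inE // big1 // => f _.
  by rewrite mul0r.
Qed.

Definition ones_in_boundary_span j := exists La : E -> F,
  (forall e, La e != 0 -> e \in boundary j) /\
  forall x, \sum_e La e * gev (tl e) x = 1.

Lemma ones_in_boundary_span3 j b1 b2 b3 (l1 l2 l3 : F) :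
  b1 \in boundary j -> b2 \in boundary j -> b3 \in boundary j ->
  (forall x, l1 * gev (tl b1) x + l2 * gev (tl b2) x + l3 * gev (tl b3) x = 1) ->
  ones_in_boundary_span j.
Proof.
move=> H1 H2 H3 H; exists (fun e => (if e == b1 then l1 else 0) +
  (if e == b2 then l2 else 0) + (if e == b3 then l3 else 0)); split.
  by move=> e; do 3![case: (eqVneq e _) => [->//|_]]; rewrite !addr0 eqxx.
move=> x; rewrite -(H x); under eq_bigr do rewrite !mulrDl.
by rewrite !big_split /= !sum_delta_mul.
Qed.

Lemma ones_in_boundary_span2 j b b' i l : i != l ->
  b \in boundary j -> b' \in boundary j ->
  (forall k, k != i -> k != l -> gev (tl b) k = 0 /\ gev (tl b') k = 0) ->
  gev (tl b) i * gev (tl b') l - gev (tl b) l * gev (tl b') i != 0 ->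
  ones_in_boundary_span j.
Proof.
move=> Hil Hb Hb' Hk HD; have [k [Hki Hkl Hx]] := ord3_third Hil.
have [bk [_ [Hbk _ Hk' _ _]]] := boundary_distinct_cuts k j.
have [ak bk0] := Hk k Hki Hkl.
have [l1 [l2 [l3 H]]] := ones_comb3 Hx ak bk0 HD (gev_neq0 Hk').
exact: ones_in_boundary_span3 Hb Hb' Hbk H.
Qed.

Lemma ones_in_boundary_span_singletons j b b' i l : i != l ->
  b \in boundary j -> b' \in boundary j -> S (tl b) = [set i] -> S (tl b') = [set l] ->
  ones_in_boundary_span j.
Proof.
move=> Hil Hb Hb' Si Sl; apply: (ones_in_boundary_span2 Hil Hb Hb').
  by move=> k Hki Hkl; rewrite (gev_single Si) (gev_single Sl) (negbTE Hki) (negbTE Hkl).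
by rewrite !(gev_single Si) !(gev_single Sl) !eqxx (negbTE Hil) /= mulr0 subr0 mulr1 oner_eq0.
Qed.

Lemma ones_in_boundary_span_pairs j b b' : b \in boundary j -> b' \in boundary j ->
  type22 (tl b) -> S (tl b) = S (tl b') -> cut (tl b) != cut (tl b') ->
  ones_in_boundary_span j.
Proof.
move=> Hb Hb' Pb HS Hne; have [lo [hi [Sb Hlt]]] := card2_ordP (card_src_set22 Pb).
have Hlh : lo != hi by rewrite neq_ltn Hlt.
have Sb' : S (tl b') = [set lo; hi] by rewrite -HS.
apply: (ones_in_boundary_span2 Hlh Hb Hb').
  by move=> k Hk1 Hk2; rewrite !gev_out // ?Sb ?Sb' !inE negb_or Hk1 Hk2.
have [-> ->] := gev_pair Sb Hlt; have [-> ->] := gev_pair Sb' Hlt.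
rewrite mul1r mulr1 subr_eq0; apply: contra Hne => /eqP /label_inj ->.
by rewrite eqxx.
Qed.

Definition boundary_singleton j m := [exists b, (b \in boundary j) && (S (tl b) == [set m])].

Lemma boundary_type22_cuts j m : ~~ boundary_singleton j m -> exists b b',
  [/\ b \in boundary j, b' \in boundary j, type22 (tl b) /\ type22 (tl b'),
      m \in S (tl b) /\ m \in S (tl b') & cut (tl b) != cut (tl b')].
Proof.
move=> Hn; have [b [b' [Hb Hb' Hm Hm' Hc]]] := boundary_distinct_cuts m j.
have type22_of c : c \in boundary j -> m \in S (tl c) -> type22 (tl c).
  move=> Hcj Hmc; have Hsh : shared (tl c) by move: Hcj; rewrite inE => /andP [].
  rewrite /type22 Hsh andbT eqn_leq card_src_set_shared //= ltnNge.
  apply: contra Hn => Hle; apply/existsP; exists c; rewrite Hcj /=.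
  by rewrite eq_sym eqEcard sub1set Hmc cards1.
have P1 := type22_of _ Hb Hm; have P2 := type22_of _ Hb' Hm'.
by exists b, b'; split => //; apply: Hc.
Qed.

(* If neither [m1] nor [m2] is alone on the boundary, each has two boundary
   (2,2)-vertices with distinct cuts; by [type22_src_set_eq] one of these pairs
   has equal source sets. *)
Lemma ones_in_boundary_span_no_singletons j m1 m2 : m1 != m2 ->
  ~~ boundary_singleton j m1 -> ~~ boundary_singleton j m2 -> ones_in_boundary_span j.
Proof.
move=> H12 /boundary_type22_cuts [b [b' [Hb Hb' [Pb Pb'] [M1 M1'] Hc]]].
move=> /boundary_type22_cuts [c [c' [Hc0 Hc0' [Pc Pc'] [M2 M2'] Hcc]]].
have [E1|n1] := eqVneq (S (tl b)) (S (tl b')).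
  exact: ones_in_boundary_span_pairs Hb Hb' Pb E1 Hc.
have [E2|n2] := eqVneq (S (tl c)) (S (tl c')).
  exact: ones_in_boundary_span_pairs Hc0 Hc0' Pc E2 Hcc.
exfalso; have same (P Q : {set 'I_3}) : #|P| = 2 -> #|Q| = 2 -> m1 \in P -> m1 \in Q ->
    m2 \in P -> m2 \in Q -> P = Q.
  by move=> cP cQ a1 a2 a3 a4; rewrite (card2_eq cP H12 a1 a3) (card2_eq cQ H12 a2 a4).
have same_bb' := same _ _ (card_src_set22 Pb) (card_src_set22 Pb') M1 M1'.
case: (type22_src_set_eq Pb Pb' Pc) => [E1|E1|E1]; first by rewrite E1 eqxx in n1.
- case: (type22_src_set_eq Pb Pb' Pc') => [E3|E3|E3]; first by rewrite E3 eqxx in n1.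
    by move: n2; rewrite -E1 -E3 eqxx.
  by move: n1; rewrite same_bb' ?eqxx ?E1 ?E3.
- case: (type22_src_set_eq Pb Pb' Pc') => [E3|E3|E3]; first by rewrite E3 eqxx in n1.
    by move: n1; rewrite same_bb' ?eqxx ?E1 ?E3.
  by move: n2; rewrite -E1 -E3 eqxx.
Qed.

Lemma ones_in_boundary_spanP j : ones_in_boundary_span j.
Proof.
have [m1 [m2 [H12 Heq]]] : exists m1 m2 : 'I_3,
    m1 != m2 /\ boundary_singleton j m1 = boundary_singleton j m2.
  case E0: (boundary_singleton j 0); case E1: (boundary_singleton j 1);
  case E2: (boundary_singleton j 2);
  by [exists 0, 1; rewrite E0 E1 | exists 0, 2; rewrite E0 E2 | exists 1, 2; rewrite E1 E2].
case S1: (boundary_singleton j m1); last first.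
  by apply: ones_in_boundary_span_no_singletons H12 _ _; rewrite -?Heq S1.
have /existsP [b /andP [Hb /eqP Sb]] := S1.
move: S1; rewrite Heq => /existsP [b' /andP [Hb' /eqP Sb']].
exact: ones_in_boundary_span_singletons H12 Hb Hb' Sb Sb'.
Qed.

(** * The code *)

Section Code.
Variables (cc : V -> E -> F) (La : 'I_3 -> E -> F).
Hypothesis cc_gev : forall u, shared u -> ~~ is_src s u ->
  forall x, gev u x = \sum_(f | hd f == u) cc u f * gev (tl f) x.
Hypothesis La_span : forall j, (forall e, La j e != 0 -> e \in boundary j) /\
  forall x, \sum_e La j e * gev (tl e) x = 1.

Definition boundary_weight e := \sum_j La j e.
Definition in_weight f := if shared (tl f) then boundary_weight f else 1.
Definition forward_edge v := [pick f | (tl f == v) && (T (hd f) == T v)].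
Definition forwards e := forward_edge (tl e) == Some e.

(* Shared vertices realise their encoding vectors; every other vertex sends the
   weighted sum of its inputs along its forward edge and 0 elsewhere. *)
Definition code_coef f e :=
  if shared (tl e) then cc (tl e) f else if forwards e then in_weight f else 0.

Local Notation sym := (code_sym tl hd s (fun=> 1) code_coef).

Lemma sym_equations : code_equations tl hd s (fun=> 1) code_coef sym.
Proof. exact: code_sym_equations. Qed.

Lemma sym_src e X i : tl e = s i -> sym e X = X i.
Proof. by move=> H; rewrite ((sym_equations X e).1 i H) mul1r. Qed.

Lemma sym_inner e X : ~~ is_src s (tl e) ->
  sym e X = \sum_(f | hd f == tl e) code_coef f e * sym f X.
Proof. exact: (sym_equations X e).2. Qed.

Lemma sym_shared e X : shared (tl e) -> sym e X = \sum_x gev (tl e) x * X x.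
Proof.
move: {2}#|upstream tl hd e|.+1 (ltnSn #|upstream tl hd e|) => n.
elim: n e => [//|n IH] e Hn Hsh.
have [/is_srcP [i Hi]|Hns] := boolP (is_src s (tl e)).
  rewrite (sym_src _ Hi) Hi (bigD1 i) //= (gev_single (src_set_src i)) eqxx mul1r.
  by rewrite big1 ?addr0 // => x /negbTE Hx; rewrite (gev_single (src_set_src i)) Hx mul0r.
rewrite sym_inner // /code_coef Hsh.
have IHf f : hd f == tl e -> sym f X = \sum_x gev (tl f) x * X x.
  move=> /eqP Hf; apply: IH; first by apply: leq_trans (upstream_lt_adj acyc Hf) _.
  by apply: shared_reaches Hsh; rewrite -Hf reaches_edge.
under eq_bigr => f Hf do rewrite IHf // mulr_sumr.
rewrite exchange_big /=; apply: eq_bigr => x _.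
by rewrite (cc_gev Hsh Hns x) mulr_suml; apply: eq_bigr => f _; rewrite mulrA.
Qed.

Section Decoding.
Variables (j : 'I_3) (X : 'I_3 -> F).

Let private := [set v | T v == [set j]].
Let inner := private :\ t j.

Let private_not_shared v : v \in private -> ~~ shared v.
Proof. by rewrite inE /shared => /eqP ->; rewrite cards1. Qed.

Let private_not_src v : v \in private -> ~~ is_src s v.
Proof.
by move=> /private_not_shared; apply: contra => /is_srcP [i ->]; apply: shared_src.
Qed.

Let term_private : t j \in private.
Proof. by rewrite inE term_set_term. Qed.

Let tl_private f : hd f \in private -> ~~ shared (tl f) -> tl f \in private.
Proof.
rewrite !inE => /eqP Hh Hn; rewrite eq_sym eqEcard.
have := term_set_edge f; rewrite Hh => ->; rewrite cards1.
by move: Hn; rewrite /shared -ltnNge ltnS.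
Qed.

Let sym_private e : tl e \in private ->
  sym e X = if forwards e then \sum_(f | hd f == tl e) in_weight f * sym f X else 0.
Proof.
move=> H; rewrite sym_inner ?private_not_src // /code_coef (negbTE (private_not_shared H)).
by case: (forwards e) => //; rewrite big1 // => f _; rewrite mul0r.
Qed.

Let forwards_term_set e : forwards e -> T (hd e) = T (tl e).
Proof.
rewrite /forwards /forward_edge; case: pickP => // f /andP [/eqP Ht /eqP H] /eqP [Hfe].
by rewrite -Hfe H Ht.
Qed.

Let forward_edge_inner v : v \in inner -> exists2 f0, forward_edge v = Some f0 & tl f0 = v.
Proof.
rewrite !inE => /andP [Hvt /eqP Hv].
have Hr : reach v (t j) by have := set11 j; rewrite -Hv inE.
have [f [Hf Hfr]] := reaches_first Hr Hvt.
rewrite /forward_edge; case: pickP => [f0 /andP [/eqP H0 _]|/(_ f)]; first by exists f0.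
rewrite Hf eqxx /= Hv => /negbT /negP; case; rewrite eq_sym eqEcard cards1.
have := term_set_edge f; rewrite Hf Hv => Hsub.
by rewrite sub1set inE Hfr /= (leq_trans (subset_leq_card Hsub)) ?cards1.
Qed.

(* Every inner private vertex forwards exactly the weighted sum of its inputs. *)
Let flow_conservation :
  \sum_(e | tl e \in inner) sym e X = \sum_(f | hd f \in inner) in_weight f * sym f X.
Proof.
rewrite (partition_big tl (mem inner)) // [RHS](partition_big hd (mem inner)) //.
apply: eq_bigr => v Hv; have [f0 Hp0 Ht0] := forward_edge_inner Hv.
have HvP : v \in private by move: Hv; rewrite !inE => /andP [].
rewrite (eq_bigl (fun e => tl e == v)); last by move=> e; rewrite andbC; case: eqP => //= ->.
rewrite [RHS](eq_bigl (fun f => hd f == v)); last first.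
  by move=> e; rewrite andbC; case: eqP => //= ->.
rewrite (bigD1 f0) ?Ht0 //= big1 ?addr0.
  by rewrite sym_private ?Ht0 // /forwards Ht0 Hp0 eqxx.
move=> e /andP [/eqP He Hne]; rewrite sym_private ?He // /forwards He Hp0.
by case: eqP => // -[E1]; rewrite E1 eqxx in Hne.
Qed.

Let boundary_weightE e : e \in boundary j -> boundary_weight e = La j e.
Proof.
move=> He; rewrite /boundary_weight (bigD1 j) //= big1 ?addr0 // => j' Hj'.
apply/eqP; apply: contraNT Hj' => /(La_span j').1; rewrite !inE => /andP [_ /eqP H2].
by move: He; rewrite inE H2 => /andP [_ /eqP /set1_inj ->].
Qed.

(* Each edge's contribution to [t j], split as boundary input + outflow - inflow
   of the inner private vertices. *)
Let term_contribution f : (if hd f == t j then in_weight f * sym f X else 0) =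
   (if f \in boundary j then boundary_weight f * sym f X else 0)
   + (if tl f \in inner then sym f X else 0)
   - (if hd f \in inner then in_weight f * sym f X else 0).
Proof.
have tl_inner v : (v \in inner) = (v != t j) && (v \in private) by rewrite in_setD1.
have Hbd : (f \in boundary j) = shared (tl f) && (hd f \in private) by rewrite !inE.
rewrite Hbd !tl_inner /in_weight; case Hsh: (shared (tl f)).
  have Hn : tl f \notin private by apply: contraTN Hsh; apply: private_not_shared.
  rewrite (negbTE Hn) andbF /= addr0.
  have [->|Hne] := eqVneq (hd f) (t j); first by rewrite term_private /= subr0.
  by case: (hd f \in private); rewrite /= ?subrr ?subr0.
rewrite /= add0r mul1r.
have [Hh|Hne] := eqVneq (hd f) (t j); rewrite /=.
  have Ht := tl_private (etrans (congr1 _ Hh) term_private) (negbT Hsh).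
  by rewrite Ht andbT tl_neq_term subr0.
case Hh: (hd f \in private).
  by rewrite (tl_private Hh (negbT Hsh)) andbT tl_neq_term subrr.
rewrite subr0; case Ht: (tl f \in private); rewrite ?andbT ?andbF //=.
case: (tl f != t j) => //.
rewrite sym_private //; case Hc: (forwards f) => //.
by move: Hh; rewrite inE (forwards_term_set Hc); move: Ht; rewrite inE => ->.
Qed.

Lemma sym_decodes : \sum_(f | hd f == t j) in_weight f * sym f X = X 0 + X 1 + X 2.
Proof.
rewrite big_mkcond (eq_bigr _ (fun f _ => term_contribution f)) sumrB big_split /=.
rewrite -!big_mkcond flow_conservation addrK big_mkcond -sum_ord3.
rewrite (eq_bigr (fun f => \sum_x La j f * gev (tl f) x * X x)); last first.
  move=> f _; case: ifP => Hf.
    rewrite boundary_weightE // sym_shared ?mulr_sumr; last first.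
      by move: Hf; rewrite inE => /andP [].
    by apply: eq_bigr => x _; rewrite mulrA.
  have [->|/(La_span j).1] := eqVneq (La j f) 0; last by rewrite Hf.
  by rewrite big1 // => x _; rewrite !mul0r.
by rewrite exchange_big /=; apply: eq_bigr => x _; rewrite -mulr_suml (La_span j).2 mul1r.
Qed.

End Decoding.

Lemma code_sum : linear_code_sum tl hd s t F.
Proof.
exists (fun=> 1), code_coef, sym; split; first exact: sym_equations.
move=> j; exists (fun y => \sum_(f | hd f == t j) in_weight f * y f) => X.
rewrite -(sym_decodes j X); apply: eq_bigr => f /eqP ->; by rewrite eqxx.
Qed.

End Code.

Lemma linear_code_sum_of_labelling : linear_code_sum tl hd s t F.
Proof.
have /fin_all_exists [cc Hcc] : forall u, exists c : E -> F, shared u -> ~~ is_src s u ->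
    forall x, gev u x = \sum_(f | hd f == u) c f * gev (tl f) x.
  move=> u; have [/andP [Hsh Hns]|H] := boolP (shared u && ~~ is_src s u).
    by have [c Hc] := gev_from_inputs_shared Hsh Hns; exists c.
  by exists (fun=> 0) => Hsh Hns; move: H; rewrite Hsh Hns.
have [La HLa] := fin_all_exists ones_in_boundary_spanP.
exact: code_sum Hcc HLa.
Qed.

End EncodingVectors.

End Network.

Lemma nonzero_labelling (T : finType) (F : finFieldType) : (#|T| < #|F|)%N ->
  exists label : T -> F, injective label /\ forall x, label x != 0.
Proof.
move=> HT; pose A := enum [set~ (0 : F)].
have rank_lt (x : T) : (enum_rank x < size A)%N.
  rewrite /A -cardE cardsC1; apply: leq_trans (ltn_ord _) _.
  by case: #|F| HT.
exists (fun x => nth 0 A (enum_rank x)); split.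
  by move=> x y /eqP; rewrite nth_uniq ?rank_lt ?enum_uniq // => /eqP /ord_inj /enum_rank_inj.
by move=> x; have := mem_nth 0 (rank_lt x); rewrite mem_enum !inE.
Qed.

Theorem lemma5 (V E : finType) (tl hd : E -> V) (s t : 'I_3 -> V) :
  is_network tl hd s t ->
  (forall v, ~~ is_src s v -> ~~ is_term t v ->
     (indeg hd v + outdeg tl v <= 3)%N) ->
  (forall v, ~~ has_type tl hd s t v 3 3 /\ ~~ has_type tl hd s t v 2 3 /\
             ~~ has_type tl hd s t v 3 2) ->
  (forall i j, exists p q, is_path tl hd (s i) (t j) p /\
                           is_path tl hd (s i) (t j) q /\ edge_disjoint p q) ->
  #|colors22 tl hd s t| = 2%N ->
  exists N : nat, forall F : finFieldType,
    (2%N \notin [pchar F])%R -> (N <= #|F|)%N -> linear_code_sum tl hd s t F.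
Proof.
move=> net deg3 types two_paths two_colors; exists #|E|.+2 => F _ HF.
have [label [label_inj label_neq0]] :
    exists label : option E -> F, injective label /\ forall x, label x != 0.
  by apply: nonzero_labelling; rewrite card_option.
exact: (linear_code_sum_of_labelling net deg3 types two_paths two_colors (F := F)
  label_inj label_neq0).
Qed.
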